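(* Let $n\ge1$, $\tau:=2n+3$, $K>0$, $a\in(0,1)$, $\rho_0>0$, $\sigma_0>0$, and let $0<\epsilon_0\le aK^{-1}(2\pi)^{-2\tau}$. Then there exists a real sequence $\{d_j\}_{j\in\mathbb{N}}$ with $0\le d_j\le1/6$ for all $j$ such that the sequences defined recursively by $$\epsilon_{j+1}:=Ka^{-1}d_j^{-\tau}\epsilon_j^2,\qquad (\rho_{j+1},\sigma_{j+1}):=(1-3d_j)(\rho_j,\sigma_j)$$ satisfy $\lim_{j\to\infty}\epsilon_j=0$ and $\rho_j\ge\rho_0/2$, $\sigma_j\ge\sigma_0/2$ for all $j$ (so the limits $\rho_*:=\rho_0/2$, $\sigma_*:=\sigma_0/2$ serve as strictly positive lower bounds). *)

From HB Require Import structures.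
From mathcomp Require Import all_boot all_order all_algebra.
From mathcomp Require Import all_classical all_reals all_analysis.
Set Implicit Arguments. Unset Strict Implicit. Unset Printing Implicit Defensive.
Import Order.TTheory GRing.Theory Num.Theory.
Local Open Scope ring_scope.

Fixpoint kam_eps (R : realType) (K a e0 : R) (tau : nat) (d : nat -> R) (j : nat) : R :=
  match j with
  | 0 => e0
  | j'.+1 => K * a^-1 * (d j') ^- tau * (kam_eps K a e0 tau d j') ^+ 2
  end.

Fixpoint kam_scale (R : realType) (r0 : R) (d : nat -> R) (j : nat) : R :=
  match j with
  | 0 => r0
  | j'.+1 => (1 - 3 * d j') * kam_scale r0 d j'
  end.

(* Take d_j := 2^-j / 12.  Since K a^-1 eps_0 <= (2 pi)^(-2 tau) <= 24^-tau
   (using pi^2 >= 8), induction gives eps_j <= eps_0 2^(-j tau): squaring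
   eps_j beats the growth (12 2^j)^tau of d_j^-tau.  The radii shrink by
   prod (1 - 3 d_j) >= 1 - 3 sum d_j >= 1/2 (Weierstrass product inequality).
   Finally pi^2 >= 8 because cos x > 0 whenever x^2 < 2, by pairing the
   terms of the alternating Taylor series, while cos (pi / 2) = 0. *)

From HB Require Import structures.
From mathcomp Require Import all_boot all_order all_algebra.
From mathcomp Require Import all_classical all_reals all_analysis.
From mathcomp Require Import ring lra.
Import Order.TTheory GRing.Theory Num.Theory numFieldNormedType.Exports.
Set Implicit Arguments. Unset Strict Implicit. Unset Printing Implicit Defensive.
Local Open Scope classical_set_scope.
Local Open Scope ring_scope.

Lemma cos_coeff'_pair_gt0 (R : realType) (x : R) k :
  x != 0 -> x ^+ 2 < 2 -> 0 < cos_coeff' x k.*2 + cos_coeff' x k.*2.+1.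
Proof.
move=> x0 x2; rewrite /cos_coeff' -!exprnP exprS -signr_odd odd_double doubleS.
set N := k.*2.*2.
rewrite expr0 !mul1r mulN1r mulNr !factS !natrM exprSr [_ ^+ N.+1]exprSr -mulrA -expr2.
have fN : 0 < N`!%:R :> R by rewrite ltr0n fact_gt0.
have xN : 0 < x ^+ N by rewrite exprn_even_gt0 ?odd_double // x0 orbT.
have N1 : 1 <= N.+1%:R :> R by rewrite ler1n.
have N2 : 2 <= N.+2%:R :> R by rewrite ler_nat.
have -> : x ^+ N / N`!%:R + - (1 * (x ^+ N * x ^+ 2)) / (N.+2%:R * (N.+1%:R * N`!%:R))
        = x ^+ N / N`!%:R * (1 - x ^+ 2 / (N.+2%:R * N.+1%:R)).
  by field; rewrite !gt_eqF // ?(lt_le_trans _ N1) ?(lt_le_trans _ N2).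
rewrite mulr_gt0 ?divr_gt0 // subr_gt0 ltr_pdivrMr ?mul1r; last first.
  by rewrite mulr_gt0 ?(lt_le_trans _ N1) ?(lt_le_trans _ N2).
apply: (lt_le_trans x2); rewrite -[2]mulr1; apply: ler_pM => //; lra.
Qed.

Lemma cos_gt0_sqr_lt2 (R : realType) (x : R) : x ^+ 2 < 2 -> 0 < cos x.
Proof.
move=> x2; have [->|x0] := eqVneq x 0; first by rewrite cos0.
have h := @cvg_cos_coeff' R x; rewrite -(cvg_lim (@Rhausdorff R) h).
apply: (@lt_trans _ _ (\sum_(0 <= i < 2) cos_coeff' x i)).
  rewrite big_nat_recr//= big_nat_recr//= big_nil add0r /cos_coeff' -!exprnP.
  rewrite expr0 expr1 fact0 !mul1r mulN1r invr1 (_ : x ^+ 1.*2 = x ^+ 2) //.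
  rewrite (_ : (1.*2)`!%:R = 2 :> R) //; lra.
apply: lt_sum_lim_series; first by move/cvgP in h.
by move=> d; exact: (cos_coeff'_pair_gt0 d.+1 x0 x2).
Qed.

Lemma pi_sqr_ge8 (R : realType) : 8 <= (pi : R) ^+ 2.
Proof.
rewrite leNgt; apply/negP => pi8.
suff : 0 < cos (pi / 2 : R) by rewrite cos_pihalf ltxx.
by apply: cos_gt0_sqr_lt2; rewrite expr_div_n; lra.
Qed.

Lemma kam_eps_ge0 (R : realType) (K a e0 : R) tau (d : nat -> R) j :
  0 <= K -> 0 <= a -> 0 <= e0 -> (forall i, 0 <= d i) ->
  0 <= kam_eps K a e0 tau d j.
Proof.
move=> K0 a0 e00 d0; elim: j => [|j IH] //=.
by rewrite !mulr_ge0 ?invr_ge0 ?exprn_ge0.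
Qed.

Lemma kam_eps_le_geometric (R : realType) (K a e0 delta q : R) tau :
  0 <= K -> 0 < a -> 0 <= e0 -> 0 < delta -> 0 < q ->
  K / a * e0 <= (delta * q) ^+ tau ->
  forall j, kam_eps K a e0 tau (geometric delta q) j <= geometric e0 (q ^+ tau) j.
Proof.
move=> K0 a0 e00 delta0 q0 small; elim=> [|j IH] /=; first by rewrite mulr1.
have eps0 : 0 <= kam_eps K a e0 tau (geometric delta q) j.
  by apply: kam_eps_ge0 => // [|i]; [exact: ltW | exact: geometric_ge0 (ltW _) (ltW _)].
have qj0 : 0 < q ^+ j by rewrite exprn_gt0.
rewrite /= in IH.
apply: (le_trans (y := K / a / (delta * q ^+ j) ^+ tau * (e0 * q ^+ tau ^+ j) ^+ 2)).
  apply: ler_wpM2l; first by rewrite !mulr_ge0 ?invr_ge0 ?exprn_ge0 ?mulr_ge0 ?exprn_ge0 // ltW.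
  by rewrite lerXn2r ?nnegrE // mulr_ge0 ?exprn_ge0 // ltW.
have -> : K / a / (delta * q ^+ j) ^+ tau * (e0 * q ^+ tau ^+ j) ^+ 2
    = K / a * e0 / delta ^+ tau * (e0 * q ^+ tau ^+ j).
  by rewrite exprMn exprAC; field; rewrite !gt_eqF ?exprn_gt0.
rewrite [X in _ <= X](_ : _ = q ^+ tau * (e0 * q ^+ tau ^+ j)); last by rewrite exprSr; ring.
apply: ler_wpM2r; first by rewrite mulr_ge0 ?exprn_ge0 // ltW.
by rewrite ler_pdivrMr ?exprn_gt0 // -exprMn (mulrC q).
Qed.

Lemma kam_eps_geometric_cvg0 (R : realType) (K a e0 delta q : R) tau :
  0 <= K -> 0 < a -> 0 <= e0 -> 0 < delta -> 0 < q < 1 -> (0 < tau)%N ->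
  K / a * e0 <= (delta * q) ^+ tau ->
  kam_eps K a e0 tau (geometric delta q) @ \oo --> 0.
Proof.
move=> K0 a0 e00 delta0 /andP[q0 q1] tau0 small.
have ratio_lt1 : `|q ^+ tau| < 1.
  by rewrite ger0_norm ?exprn_ge0 ?exprn_ilt1 -?lt0n // ltW.
apply: (squeeze_cvgr _ (cvg_cst 0) (cvg_geometric e0 ratio_lt1)).
apply: nearW => j; rewrite kam_eps_le_geometric // andbT.
apply: kam_eps_ge0 => // [|i]; first exact: ltW.
by rewrite mulr_ge0 ?exprn_ge0 ?ltW.
Qed.

Lemma ler_1Bsum_prod1B (R : realDomainType) (x : nat -> R) n :
  (forall i, 0 <= x i <= 1) ->
  1 - \sum_(0 <= i < n) x i <= \prod_(0 <= i < n) (1 - x i).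
Proof.
move=> x01; elim: n => [|n IH]; first by rewrite !big_geq // subr0.
have /andP[xn0 xn1] := x01 n.
have P1 : \prod_(0 <= i < n) (1 - x i) <= 1.
  by apply: prodr_ile1 => i _; have /andP[? ?] := x01 i; apply/andP; split; lra.
rewrite !big_nat_recr //=; nra.
Qed.

Lemma kam_scaleE (R : realType) (r0 : R) d j :
  kam_scale r0 d j = r0 * \prod_(0 <= i < j) (1 - 3 * d i).
Proof.
elim: j => [|j IH] /=; first by rewrite big_geq ?mulr1.
by rewrite IH big_nat_recr //=; ring.
Qed.

Lemma kam_scale_ge (R : realType) (r0 : R) d j :
  0 <= r0 -> (forall i, 0 <= 3 * d i <= 1) ->
  r0 * (1 - 3 * \sum_(0 <= i < j) d i) <= kam_scale r0 d j.
Proof.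
move=> r00 d01; rewrite kam_scaleE; apply: ler_wpM2l => //.
by rewrite mulr_sumr; exact: ler_1Bsum_prod1B.
Qed.

Lemma series_geometric_le (R : numFieldType) (a z : R) n :
  0 <= a -> 0 <= z < 1 -> series (geometric a z) n <= a / (1 - z).
Proof.
move=> a0 /andP[z0 z1]; rewrite geometric_seriesE ?lt_eqF //=.
rewrite ler_pM2r ?invr_gt0 ?subr_gt0 // ler_piMr // gerBl exprn_ge0 //.
Qed.

Lemma kam_scale_geometric_ge (R : realType) (r0 delta q : R) j :
  0 <= r0 -> 0 <= delta -> 3 * delta <= 1 -> 0 <= q < 1 ->
  r0 * (1 - 3 * (delta / (1 - q))) <= kam_scale r0 (geometric delta q) j.
Proof.
move=> r00 delta0 delta1 /andP[q0 q1].
apply: le_trans (kam_scale_ge j r00 _) => [|i].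
  apply: ler_wpM2l => //; rewrite lerD2l lerN2 ler_wpM2l //.
  by rewrite -[X in X <= _]/(series _ j) series_geometric_le // q0.
have qi : 0 <= q ^+ i <= 1 by rewrite exprn_ge0 // exprn_ile1 // ltW.
by rewrite /=; nra.
Qed.

Lemma exprN_2pi_le (R : realType) k : (2 * pi : R) ^- (2 * k) <= 24^-1 ^+ k.
Proof.
have pi2 : 24 <= (2 * pi : R) ^+ 2 by have := pi_sqr_ge8 R; rewrite exprMn; nra.
rewrite exprM -exprVn lerXn2r ?nnegrE ?invr_ge0 ?exprn_ge0 ?mulr_ge0 ?pi_ge0 //.
by rewrite lef_pV2 ?posrE ?exprn_gt0 ?mulr_gt0 ?pi_gt0.
Qed.

Theorem lemma2 (R : realType) (n : nat) (K a rho0 sigma0 eps0 : R) :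
  (1 <= n)%N -> 0 < K -> 0 < a -> a < 1 -> 0 < rho0 -> 0 < sigma0 ->
  0 < eps0 -> eps0 <= a * K^-1 * (2 * pi) ^- (2 * (2 * n + 3)) ->
  exists d : nat -> R,
    (forall j, 0 < d j <= 1 / 6) /\
    (kam_eps K a eps0 (2 * n + 3) d @ \oo --> 0) /\
    (forall j, rho0 / 2 <= kam_scale rho0 d j) /\
    (forall j, sigma0 / 2 <= kam_scale sigma0 d j).
Proof.
move=> _ K0 a0 _ rho00 sigma00 eps00 eps0_small.
exists (geometric 12^-1 2^-1); split.
  move=> j; have : 0 < (2^-1 : R) ^+ j <= 1 by rewrite exprn_gt0 ?exprn_ile1 //=; lra.
  rewrite /=; nra.
have Keps0_small : K / a * eps0 <= (12^-1 * 2^-1) ^+ (2 * n + 3).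
  apply: (le_trans (ler_wpM2l _ eps0_small)); first by rewrite divr_ge0 ?ltW.
  rewrite mulrA (_ : K / a * (a * K^-1) = 1) ?mul1r; last by field; rewrite !gt_eqF.
  by rewrite (_ : 12^-1 * 2^-1 = 24^-1 :> R) ?exprN_2pi_le //; field.
split.
  apply: (kam_eps_geometric_cvg0 (ltW K0) a0 (ltW eps00) _ _ _ Keps0_small).
  - lra.
  - by apply/andP; split; lra.
  - by rewrite addn3.
have scale_ge r0 : 0 < r0 -> forall j, r0 / 2 <= kam_scale r0 (geometric 12^-1 2^-1) j.
  move=> r00 j; apply: le_trans (kam_scale_geometric_ge j (ltW r00) _ _ _).
  - by rewrite [X in 3 * X](_ : _ = 6^-1); [lra | field].
  - lra.
  - lra.
  - by apply/andP; split; lra.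
by split; apply: scale_ge.
Qed.
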